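(* Let $\mathbf G$ be a torsion-free group, and let $x,y,z\in G$ be such that $x,y\in O_{\mathbf G}(z)$, $x\to y$ in $\vec{\mathcal G}^\pm(\mathbf G)$, and $y\notin\{x,x^{-1}\}$. Let $\mathbf H$ be a group and $\varphi:G\to H$ an isomorphism from $\mathcal G^\pm(\mathbf G)$ to $\mathcal G^\pm(\mathbf H)$. Then $\varphi(x)\to\varphi(y)$ in $\vec{\mathcal G}^\pm(\mathbf H)$ if and only if $\varphi(O_{\mathbf G}(z))=O_{\mathbf H}(\varphi(z))$.
   Context: For a group $\mathbf G$, the directed $Z^\pm$-power graph $\vec{\mathcal G}^\pm(\mathbf G)$ has vertex set $G$ and an arc $x\to y$ for distinct $x,y$ iff $y=x^n$ for some $n\in\mathbb Z\setminus\{0\}$; its underlying simple graph is the $Z^\pm$-power graph $\mathcal G^\pm(\mathbf G)$. For $z\in G$, $O_{\mathbf G}(z)=\{y\in G\setminus\{z^{-1}\}\mid z\to y\text{ in }\vec{\mathcal G}^\pm(\mathbf G)\}$. *)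

From Stdlib Require Import ZArith.
Set Implicit Arguments.

Record Group := {
  carrier :> Type;
  gmul : carrier -> carrier -> carrier;
  gone : carrier;
  ginv : carrier -> carrier;
  gmulA : forall a b c, gmul a (gmul b c) = gmul (gmul a b) c;
  gmul1 : forall a, gmul gone a = a;
  gmulV : forall a, gmul (ginv a) a = gone
}.

Fixpoint npow {G : Group} (x : G) (n : nat) : G :=
  match n with
  | O => gone G
  | S m => gmul G x (@npow G x m)
  end.

Definition zpow {G : Group} (x : G) (n : Z) : G :=
  match n with
  | Z0 => gone G
  | Zpos p => npow x (Pos.to_nat p)
  | Zneg p => ginv G (npow x (Pos.to_nat p))
  end.

Definition torsion_free (G : Group) : Prop :=
  forall (x : G) (n : nat), (0 < n)%nat -> npow x n = gone G -> x = gone G.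

Definition arc {G : Group} (x y : G) : Prop :=
  x <> y /\ exists n : Z, n <> 0%Z /\ y = zpow x n.

Definition edge {G : Group} (x y : G) : Prop := arc x y \/ arc y x.

Definition Oset {G : Group} (z : G) (y : G) : Prop :=
  y <> ginv G z /\ arc z y.

Definition power_graph_iso {G H : Group} (phi : G -> H) : Prop :=
  (exists psi : H -> G, (forall a, psi (phi a) = a) /\ (forall b, phi (psi b) = b)) /\
  (forall a b : G, edge a b <-> edge (phi a) (phi b)).

From Stdlib Require Import ZArith Lia List Classical FinFun.

(* In a torsion-free group the powers z^a, z^b of z <> 1 are adjacent exactly
   when one exponent divides the other, and O(z) = {z^a | |a| >= 2}.  The edge
   z - u, for u in O(z), is carried by phi either to an arc phi z -> phi u with
   phi u in O(phi z), or to an arc phi u -> phi z; comparing u and u' with their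
   common non-neighbour z^((ab)^2+1) shows that the alternative is the same for
   all u in O(z).  The vertices u_k = z^(a(n(k+2)+1)), for x = z^a and y = x^n,
   are adjacent to x but not to y.  In either direction of the equivalence the
   wrong alternative puts all phi(u_k) on directed paths r -> . -> w between
   two fixed vertices, and torsion-freeness leaves only finitely many such
   middle vertices. *)

Lemma mulgV {G : Group} (a : G) : gmul G a (ginv G a) = gone G.
Proof.
  set (b := ginv G a).
  transitivity (gmul G (gmul G (ginv G b) b) (gmul G a b)).
  - rewrite gmulV, gmul1. reflexivity.
  - rewrite <- gmulA, (gmulA _ b a b). unfold b at 2 3.
    rewrite gmulV, gmul1. apply gmulV.
Qed.

Lemma mulg1 {G : Group} (a : G) : gmul G a (gone G) = a.
Proof. rewrite <- (gmulV G a), gmulA, mulgV, gmul1. reflexivity. Qed.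

Lemma invg_unique {G : Group} (a b : G) : gmul G a b = gone G -> a = ginv G b.
Proof. intro E. rewrite <- (mulg1 a), <- (mulgV b), gmulA, E, gmul1. reflexivity. Qed.

Lemma invgK {G : Group} (a : G) : ginv G (ginv G a) = a.
Proof. symmetry. apply invg_unique, mulgV. Qed.

Lemma invg1 {G : Group} : ginv G (gone G) = gone G.
Proof. symmetry. apply invg_unique, gmul1. Qed.

Lemma invgM {G : Group} (a b : G) :
  ginv G (gmul G a b) = gmul G (ginv G b) (ginv G a).
Proof.
  symmetry. apply invg_unique.
  rewrite <- gmulA, (gmulA _ (ginv G a)), gmulV, gmul1, gmulV. reflexivity.
Qed.

Lemma npowD {G : Group} (x : G) m n :
  npow x (m + n) = gmul G (npow x m) (npow x n).
Proof.
  induction m as [|m IHm]; simpl.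
  - rewrite gmul1. reflexivity.
  - rewrite IHm, gmulA. reflexivity.
Qed.

Lemma npowSr {G : Group} (x : G) m : npow x (S m) = gmul G (npow x m) x.
Proof.
  replace (S m) with (m + 1)%nat by lia. rewrite npowD. simpl. rewrite mulg1. reflexivity.
Qed.

Lemma zpow_of_nat {G : Group} (x : G) k : zpow x (Z.of_nat k) = npow x k.
Proof. destruct k; [reflexivity|]. simpl. rewrite SuccNat2Pos.id_succ. reflexivity. Qed.

Open Scope Z_scope.

Lemma zpowS {G : Group} (x : G) n : zpow x (n + 1) = gmul G x (zpow x n).
Proof.
  destruct n as [|p|p].
  - reflexivity.
  - replace (Z.pos p + 1) with (Z.pos (Pos.succ p)) by lia.
    simpl. rewrite Pos2Nat.inj_succ. reflexivity.
  - destruct (Pos.succ_pred_or p) as [E|E].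
    + subst p. simpl. rewrite mulg1, mulgV. reflexivity.
    + rewrite <- E. replace (Z.neg (Pos.succ (Pos.pred p)) + 1) with (Z.neg (Pos.pred p)) by lia.
      simpl. rewrite Pos2Nat.inj_succ, npowSr, invgM, gmulA, mulgV, gmul1. reflexivity.
Qed.

Lemma zpow_pred {G : Group} (x : G) n : zpow x (n - 1) = gmul G (ginv G x) (zpow x n).
Proof.
  replace n with (n - 1 + 1) at 2 by lia. rewrite zpowS, gmulA, gmulV, gmul1. reflexivity.
Qed.

Lemma zpow1 {G : Group} (x : G) : zpow x 1 = x.
Proof. apply mulg1. Qed.

Lemma zpowN1 {G : Group} (x : G) : zpow x (-1) = ginv G x.
Proof. simpl. rewrite mulg1. reflexivity. Qed.

Lemma zpowD {G : Group} (x : G) a b : zpow x (a + b) = gmul G (zpow x a) (zpow x b).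
Proof.
  induction a as [|a IHa|a IHa] using Z.peano_ind.
  - simpl. rewrite gmul1. reflexivity.
  - rewrite <- Z.add_1_r. replace (a + 1 + b) with (a + b + 1) by lia.
    rewrite !zpowS, IHa, gmulA. reflexivity.
  - rewrite <- Z.sub_1_r. replace (a - 1 + b) with (a + b - 1) by lia.
    rewrite !zpow_pred, IHa, gmulA. reflexivity.
Qed.

Lemma zpowN {G : Group} (x : G) a : zpow x (- a) = ginv G (zpow x a).
Proof. apply invg_unique. rewrite <- zpowD, Z.add_opp_diag_l. reflexivity. Qed.

Lemma zpowM {G : Group} (x : G) a b : zpow (zpow x a) b = zpow x (a * b).
Proof.
  induction b as [|b IHb|b IHb] using Z.peano_ind.
  - rewrite Z.mul_0_r. reflexivity.
  - rewrite <- Z.add_1_r, zpowS, IHb, <- zpowD. f_equal. lia.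
  - rewrite <- Z.sub_1_r, zpow_pred, IHb, <- zpowN, <- zpowD. f_equal. lia.
Qed.

Lemma zpow1g {G : Group} n : zpow (gone G) n = gone G.
Proof. change (gone G) with (zpow (gone G) 0) at 1. rewrite zpowM. reflexivity. Qed.

Lemma zpow_invg {G : Group} (x : G) n : zpow (ginv G x) n = zpow x (- n).
Proof. rewrite <- zpowN1, zpowM. f_equal. Qed.

Lemma torsion_free_zpow_eq1 {G : Group} (HG : torsion_free G) (x : G) n :
  n <> 0 -> zpow x n = gone G -> x = gone G.
Proof.
  intros Hn E. destruct n as [|p|p]; [lia| |].
  - exact (HG x (Pos.to_nat p) (Pos2Nat.is_pos p) E).
  - apply (HG x (Pos.to_nat p) (Pos2Nat.is_pos p)). simpl in E.
    rewrite <- (invgK (npow x _)), E, invg1. reflexivity.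
Qed.

Lemma zpow_inj {G : Group} (HG : torsion_free G) (x : G) a b :
  x <> gone G -> zpow x a = zpow x b -> a = b.
Proof.
  intros Hx E. destruct (Z.eq_dec a b) as [|D]; [assumption|].
  exfalso. apply Hx, (torsion_free_zpow_eq1 HG x (a - b)); [lia|].
  rewrite <- Z.add_opp_r, zpowD, E, <- zpowD, Z.add_opp_diag_r. reflexivity.
Qed.

Lemma Zdivide_abs_le a b : (a | b) -> b <> 0 -> Z.abs a <= Z.abs b.
Proof.
  intros D Hb. apply Z.divide_pos_le; [lia|].
  apply Z.divide_abs_l, Z.divide_abs_r, D.
Qed.

Lemma Znot_divide_succ a c : 2 <= Z.abs a -> (a | c) -> ~ (a | c + 1).
Proof.
  intros Ha D D'. destruct (Z.divide_1_r a); [|lia|lia].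
  exact (Z.divide_add_cancel_r _ _ _ D D').
Qed.

Lemma Znot_divide_abs_lt a c : a <> 0 -> Z.abs a < Z.abs c -> ~ (c | a).
Proof. intros Ha Hlt D. pose proof (Zdivide_abs_le _ _ D Ha). lia. Qed.

Lemma Zabs_lt_mul_succ n K : 2 <= Z.abs n -> 2 <= K -> Z.abs n < Z.abs (n * K + 1).
Proof. intros Hn HK. destruct (Z.abs_spec n) as [[? E]|[? E]]; rewrite E in Hn; nia. Qed.

Lemma one_isolated {G : Group} (HG : torsion_free G) (b : G) : ~ edge (gone G) b.
Proof.
  intros [[Hne [n [Hn E]]]|[Hne [n [Hn E]]]]; apply Hne.
  - rewrite E, zpow1g. reflexivity.
  - exact (torsion_free_zpow_eq1 HG b n Hn (eq_sym E)).
Qed.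

Lemma arc_zpow2 {G : Group} (h : G) : h <> gone G -> arc h (zpow h 2).
Proof.
  intro Hh. split; [|exists 2; split; [lia|reflexivity]].
  change (zpow h 2) with (gmul G h (gmul G h (gone G))). rewrite mulg1. intro E.
  apply Hh. rewrite <- (gmulV G h). rewrite E at 3. rewrite gmulA, gmulV, gmul1. reflexivity.
Qed.

Lemma torsion_free_of_one_isolated {G : Group} :
  (forall b : G, ~ edge (gone G) b) -> torsion_free G.
Proof.
  intros Hiso x n Hn E. apply NNPP. intro Hx. apply (Hiso x). right. split; [auto|].
  exists (Z.of_nat n). split; [lia|]. rewrite zpow_of_nat. auto.
Qed.

Lemma arc_trans {G : Group} (p q r : G) : arc p q -> arc q r -> p <> r -> arc p r.
Proof.
  intros [_ [m [Hm Eq]]] [_ [n [Hn Er]]] Hpr. split; [exact Hpr|].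
  exists (m * n). split; [lia|]. rewrite Er, Eq, zpowM. reflexivity.
Qed.

Lemma edge_invg {G : Group} (w v : G) : edge w v -> v <> ginv G w -> edge (ginv G w) v.
Proof.
  intros [[Hne [n [Hn E]]]|[Hne [n [Hn E]]]] Hv.
  - left. split; [auto|]. exists (- n). split; [lia|].
    rewrite zpow_invg, Z.opp_involutive. exact E.
  - right. split; [auto|]. exists (- n). split; [lia|]. rewrite zpowN, E. reflexivity.
Qed.

Lemma edge_oriented_by_out_arc {G : Group} (p q s : G) :
  edge p q -> ~ edge p s -> p <> s -> arc q s -> arc q p.
Proof.
  intros [A|A] Nps Hps Aqs; [exfalso|exact A].
  apply Nps. left. exact (arc_trans p q s A Aqs Hps).
Qed.

Lemma edge_oriented_by_in_arc {G : Group} (p q s : G) :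
  edge p q -> ~ edge p s -> p <> s -> arc s q -> arc p q.
Proof.
  intros [A|A] Nps Hps Asq; [exact A|exfalso].
  apply Nps. right. exact (arc_trans s q p Asq A (not_eq_sym Hps)).
Qed.

Section TorsionFreePowers.

Variables (G : Group) (HG : torsion_free G).

Lemma arc_zpow_divide (z : G) a b :
  z <> gone G -> arc (zpow z a) (zpow z b) -> (a | b).
Proof.
  intros Hz [_ [n [_ E]]]. exists n. rewrite Z.mul_comm.
  rewrite zpowM in E. exact (zpow_inj HG z _ _ Hz E).
Qed.

Lemma arc_zpow_intro (z : G) a b :
  z <> gone G -> a <> b -> b <> 0 -> (a | b) -> arc (zpow z a) (zpow z b).
Proof.
  intros Hz Hab Hb [n E]. split.
  - intro E'. exact (Hab (zpow_inj HG z _ _ Hz E')).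
  - exists n. split; [intro; subst; lia|]. rewrite zpowM, E, Z.mul_comm. reflexivity.
Qed.

Lemma not_edge_zpow (z : G) a b :
  z <> gone G -> ~ (a | b) -> ~ (b | a) -> ~ edge (zpow z a) (zpow z b).
Proof.
  intros Hz Dab Dba [A|A]; apply arc_zpow_divide in A; auto.
Qed.

Lemma Oset_zpow (z u : G) :
  Oset z u -> z <> gone G /\ exists a, 2 <= Z.abs a /\ u = zpow z a.
Proof.
  intros [Hi [Hzu [a [Ha E]]]]. split.
  - intro Z1. apply Hzu. rewrite E, Z1, zpow1g. reflexivity.
  - exists a. split; [|exact E].
    assert (a <> 1) by (intro; subst; apply Hzu; rewrite zpow1; reflexivity).
    assert (a <> -1) by (intro; subst; apply Hi; rewrite zpowN1; reflexivity).
    lia.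
Qed.

Lemma Oset_zpow_intro (z : G) a :
  z <> gone G -> 2 <= Z.abs a -> Oset z (zpow z a).
Proof.
  intros Hz Ha. split; [|split].
  - rewrite <- zpowN1. intro E. apply (zpow_inj HG) in E; auto. lia.
  - rewrite <- (zpow1 z) at 1. intro E. apply (zpow_inj HG) in E; auto. lia.
  - exists a. split; [lia|reflexivity].
Qed.

Lemma Oset_not_arc (w p : G) : Oset w p -> ~ arc p w.
Proof.
  intros Hp [_ [m [_ E]]]. destruct (Oset_zpow w p Hp) as [Hw [e [He Ep]]].
  rewrite Ep, zpowM in E. rewrite <- (zpow1 w) in E at 1.
  apply (zpow_inj HG) in E; auto. symmetry in E. apply Z.eq_mul_1 in E. lia.
Qed.

Lemma arc_Oset (w p q : G) : Oset w p -> arc q w -> arc q p.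
Proof.
  intros Hp Hq. apply (arc_trans q w p Hq (proj2 Hp)).
  intro E. subst q. exact (Oset_not_arc w p Hp Hq).
Qed.

Lemma injective_not_bounded_zpow (r : G) (B : Z) (g : nat -> G) :
  Injective g -> ~ (forall k, exists e, Z.abs e <= B /\ g k = zpow r e).
Proof.
  intros Hinj Hb.
  assert (HB : 0 <= B) by (destruct (Hb O) as [e [He _]]; lia).
  set (N := Z.to_nat (2 * B + 1)).
  assert (ND : NoDup (map g (seq 0 (S N)))).
  { apply Injective_map_NoDup; [exact Hinj|apply seq_NoDup]. }
  assert (IN : incl (map g (seq 0 (S N))) (map (fun i => zpow r (Z.of_nat i - B)) (seq 0 N))).
  { intros h Hh. apply in_map_iff in Hh. destruct Hh as [k [<- _]].
    destruct (Hb k) as [e [He Ee]]. apply in_map_iff. exists (Z.to_nat (e + B)). split.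
    - rewrite Ee. f_equal. lia.
    - apply in_seq. unfold N. lia. }
  pose proof (NoDup_incl_length ND IN) as L.
  rewrite !length_map, !length_seq in L. lia.
Qed.

Lemma arc_intermediates_finite (r w : G) (g : nat -> G) :
  Injective g -> ~ (forall k, arc r (g k) /\ arc (g k) w).
Proof.
  intros Hinj Hg.
  assert (Hw : w <> gone G).
  { intro E. subst w. apply (one_isolated HG (g O)). right. exact (proj2 (Hg O)). }
  assert (Hr : r <> gone G).
  { intro E. subst r. apply (one_isolated HG (g O)). left. exact (proj1 (Hg O)). }
  destruct (Hg O) as [[_ [e0 [_ E0]]] [_ [s0 [_ S0]]]].
  assert (Em : w = zpow r (e0 * s0)) by (rewrite S0, E0, zpowM; reflexivity).
  assert (Hm : e0 * s0 <> 0) by (intro E; apply Hw; rewrite Em, E; reflexivity).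
  (* Each g k is r^e with e dividing the fixed nonzero exponent e0 * s0 of w. *)
  apply (injective_not_bounded_zpow r (Z.abs (e0 * s0)) g Hinj). intro k.
  destruct (Hg k) as [[_ [e [_ Ek]]] [_ [s [_ Sk]]]]. exists e. split; [|exact Ek].
  rewrite Ek, zpowM, Em in Sk. apply (zpow_inj HG) in Sk; [|exact Hr].
  apply (Zdivide_abs_le e); [exists s; lia|exact Hm].
Qed.

Lemma Oset_arc_family (z x y : G) :
  Oset z x -> arc x y -> y <> x -> y <> ginv G x ->
  exists u : nat -> G, Injective u /\
    forall k, Oset z (u k) /\ arc x (u k) /\ ~ edge (u k) y /\ u k <> y.
Proof.
  intros Hx [_ [n [Hn Ey]]] Hyx Hyx'.
  destruct (Oset_zpow z x Hx) as [Hz [a [Ha Ex]]]. subst x.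
  rewrite zpowM in Ey. subst y.
  assert (Hn2 : 2 <= Z.abs n).
  { assert (n <> 1) by (intro; subst; rewrite Z.mul_1_r in Hyx; auto).
    assert (n <> -1) by (intro; subst; rewrite <- zpowM, zpowN1 in Hyx'; auto).
    lia. }
  exists (fun k => zpow z (a * (n * (Z.of_nat k + 2) + 1))). split.
  - intros i j E. apply (zpow_inj HG) in E; [|exact Hz].
    apply Z.mul_reg_l in E; [|lia]. assert (E' : n * (Z.of_nat i + 2) = n * (Z.of_nat j + 2)) by lia.
    apply Z.mul_reg_l in E'; lia.
  - intro k. set (c := n * (Z.of_nat k + 2) + 1).
    assert (Hc : Z.abs n < Z.abs c) by (apply Zabs_lt_mul_succ; lia).
    assert (Hac : Z.abs a <= Z.abs (a * c)) by (rewrite Z.abs_mul; nia).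
    split; [|split; [|split]].
    + apply Oset_zpow_intro; [exact Hz|lia].
    + apply arc_zpow_intro; [exact Hz| |lia|apply Z.divide_factor_l].
      intro E. rewrite <- (Z.mul_1_r a) in E at 1. apply Z.mul_reg_l in E; lia.
    + apply not_edge_zpow; [exact Hz| |]; rewrite Z.mul_divide_cancel_l by lia.
      * apply Znot_divide_abs_lt; lia.
      * apply Znot_divide_succ; [lia|apply Z.divide_factor_l].
    + intro E. apply (zpow_inj HG) in E; [|exact Hz]. apply Z.mul_reg_l in E; lia.
Qed.

End TorsionFreePowers.

Lemma power_graph_iso_inv {G H : Group} (phi : G -> H) : power_graph_iso phi ->
  exists psi : H -> G, power_graph_iso psi /\
    (forall a, psi (phi a) = a) /\ (forall b, phi (psi b) = b).
Proof.
  intros [[psi [K1 K2]] He]. exists psi. split; [|auto]. split.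
  - exists phi. auto.
  - intros a b. rewrite He, !K2. tauto.
Qed.

Lemma power_graph_iso_inj {G H : Group} (phi : G -> H) :
  power_graph_iso phi -> Injective phi.
Proof. intros [[psi [K1 _]] _] a b E. rewrite <- (K1 a), <- (K1 b), E. reflexivity. Qed.

Lemma power_graph_iso_torsion_free {G H : Group} (phi : G -> H) :
  torsion_free G -> power_graph_iso phi -> torsion_free H.
Proof.
  intros HG [[psi [K1 K2]] He].
  assert (E1 : phi (gone G) = gone H).
  { apply NNPP. intro Hne. apply (one_isolated HG (psi (zpow (phi (gone G)) 2))).
    apply He. rewrite K2. left. exact (arc_zpow2 _ Hne). }
  apply torsion_free_of_one_isolated. intros b E.
  rewrite <- E1, <- (K2 b) in E. exact (one_isolated HG _ (proj2 (He _ _) E)).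
Qed.

Section PowerGraphIso.

Variables (G H : Group) (phi : G -> H).
Hypotheses (HG : torsion_free G) (Hphi : power_graph_iso phi).

Let HH : torsion_free H := power_graph_iso_torsion_free phi HG Hphi.

Lemma Oset_image_or_arc (z u : G) :
  Oset z u -> Oset (phi z) (phi u) \/ arc (phi u) (phi z).
Proof.
  intros Hu. assert (Ed : edge (phi z) (phi u)) by (apply Hphi; left; exact (proj2 Hu)).
  destruct Ed as [A|A]; [left|right; exact A]. split; [|exact A].
  destruct (Oset_zpow G z u Hu) as [Hz [a [Ha ->]]]. intro E.
  (* (phi z)^-1 inherits the neighbours of phi z, but z^(2a+1) is adjacent to z and not to z^a. *)
  assert (Ev : edge (phi z) (phi (zpow z (a * 2 + 1)))).
  { apply Hphi. left. rewrite <- (zpow1 z) at 1.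
    apply arc_zpow_intro; [exact HG|exact Hz|lia|lia|apply Z.divide_1_l]. }
  apply edge_invg in Ev.
  - rewrite <- E in Ev. apply Hphi in Ev. revert Ev. apply not_edge_zpow; [exact HG|exact Hz| |].
    + apply Znot_divide_succ; [lia|apply Z.divide_factor_l].
    + apply Znot_divide_abs_lt; lia.
  - rewrite <- E. intro E'. apply (power_graph_iso_inj phi Hphi), (zpow_inj HG) in E'; [lia|exact Hz].
Qed.

Lemma Oset_image_all (z u u' : G) :
  Oset z u -> Oset z u' -> Oset (phi z) (phi u) -> Oset (phi z) (phi u').
Proof.
  intros Hu Hu' Pu.
  destruct (Oset_zpow G z u Hu) as [Hz [a [Ha ->]]].
  destruct (Oset_zpow G z u' Hu') as [_ [b [Hb ->]]].
  (* z^c is adjacent to neither u nor u', so its image decides the alternative for both. *)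
  set (c := a * b * (a * b) + 1).
  assert (N : forall e, 2 <= Z.abs e -> (e | a * b) -> ~ edge (zpow z e) (zpow z c)).
  { intros e He D. assert (Hab : Z.abs e <= Z.abs (a * b)) by (apply Zdivide_abs_le; [exact D|nia]).
    apply not_edge_zpow; [exact HG|exact Hz| |].
    - apply Znot_divide_succ; [exact He|apply Z.divide_mul_l, D].
    - apply Znot_divide_abs_lt; [lia|]. unfold c. rewrite Z.abs_mul in *. nia. }
  assert (Pc : Oset (phi z) (phi (zpow z c))).
  { assert (Hc : Oset z (zpow z c)) by (apply Oset_zpow_intro; [exact HG|exact Hz|unfold c; nia]).
    destruct (Oset_image_or_arc z (zpow z c) Hc) as [P|A]; [exact P|exfalso].
    apply (N a Ha (Z.divide_factor_l a b)), Hphi. right. exact (arc_Oset H HH _ _ _ Pu A). }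
  destruct (Oset_image_or_arc z (zpow z b) Hu') as [P|A]; [exact P|exfalso].
  apply (N b Hb (Z.divide_factor_r b a)), Hphi. left. exact (arc_Oset H HH _ _ _ Pc A).
Qed.

End PowerGraphIso.

Lemma Oset_image_eq {G H : Group} (phi : G -> H) (z x : G) :
  torsion_free G -> power_graph_iso phi -> Oset z x -> Oset (phi z) (phi x) ->
  forall w : H, Oset (phi z) w <-> exists u : G, Oset z u /\ w = phi u.
Proof.
  intros HG Hphi Hx Px w. split.
  - intros Pw. destruct (power_graph_iso_inv phi Hphi) as [psi [Hpsi [K1 K2]]].
    exists (psi w). split; [|symmetry; apply K2].
    pose proof (power_graph_iso_torsion_free phi HG Hphi) as HH.
    rewrite <- (K1 z). apply (Oset_image_all H G psi HH Hpsi (phi z) (phi x)); auto.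
    rewrite !K1. exact Hx.
  - intros [u [Hu ->]]. exact (Oset_image_all G H phi HG Hphi z x u Hx Hu Px).
Qed.

Theorem mainTheorem8 (G : Group) (x y z : G)
  (HG : torsion_free G)
  (Hx : Oset z x) (Hy : Oset z y)
  (Hxy : arc x y) (Hy1 : y <> x) (Hy2 : y <> ginv G x)
  (H : Group) (phi : G -> H) (Hphi : power_graph_iso phi) :
  arc (phi x) (phi y) <->
  (forall w : H, Oset (phi z) w <-> exists u : G, Oset z u /\ w = phi u).
Proof.
  pose proof (power_graph_iso_torsion_free phi HG Hphi) as HH.
  pose proof (power_graph_iso_inj phi Hphi) as Hinj_phi.
  destruct (Oset_arc_family G HG z x y Hx Hxy Hy1 Hy2) as [u [Hinj Hu]].
  set (g := fun k => phi (u k)).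
  assert (Ginj : Injective g) by (intros i j E; exact (Hinj _ _ (Hinj_phi _ _ E))).
  assert (Hg : forall k, edge (g k) (phi x) /\ ~ edge (g k) (phi y) /\ g k <> phi y).
  { intro k. destruct (Hu k) as [_ [Ak [Nk Dk]]]. unfold g. rewrite <- !(proj2 Hphi).
    split; [right; exact Ak|split; [exact Nk|intro E; exact (Dk (Hinj_phi _ _ E))]]. }
  split.
  - intro Harc. apply (Oset_image_eq phi z x HG Hphi Hx).
    destruct (Oset_image_or_arc G H phi HG Hphi z x Hx) as [Px|Ax]; [exact Px|exfalso].
    apply (arc_intermediates_finite H HH (phi x) (phi z) g Ginj). intro k.
    destruct (Hg k) as [Ek [Nk Dk]]. split.
    + exact (edge_oriented_by_out_arc _ _ _ Ek Nk Dk Harc).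
    + destruct (Oset_image_or_arc G H phi HG Hphi z (u k) (proj1 (Hu k))) as [P|A]; [exfalso|exact A].
      exact (Oset_not_arc H HH _ _ (Oset_image_all G H phi HG Hphi z (u k) x (proj1 (Hu k)) Hx P) Ax).
  - intro R.
    assert (Exy : edge (phi x) (phi y)) by (apply Hphi; left; exact Hxy).
    destruct Exy as [A|A]; [exact A|exfalso].
    apply (arc_intermediates_finite H HH (phi z) (phi x) g Ginj). intro k.
    destruct (Hg k) as [Ek [Nk Dk]]. split.
    + assert (Pk : Oset (phi z) (g k)) by (apply R; exists (u k); split; [apply Hu|reflexivity]).
      exact (proj2 Pk).
    + exact (edge_oriented_by_in_arc _ _ _ Ek Nk Dk A).
Qed.
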